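(* Let $G$ be a multitriangulation of the projective plane. Then $G$ has a vertex of degree $2$, $3$, $4$ or $6$, or two adjacent vertices of degree $5$.
   Context: A multitriangulation of a surface is a loopless multigraph 2-cell embedded on the surface such that every facial closed walk has length 3. *)

From mathcomp Require Import all_boot.
Set Implicit Arguments. Unset Strict Implicit. Unset Printing Implicit Defensive.

(* Cellular embeddings of (multi)graphs in (possibly non-orientable) closed
   surfaces, encoded combinatorially as graph-encoded maps (gems / generalized
   maps): a finite set T of flags with three fixed-point-free involutions
   a0 (change vertex), a1 (change edge), a2 (change face) such that
   a0 a2 = a2 a0 is a fixed-point-free involution.
   vertices = <a1,a2>-orbits, edges = <a0,a2>-orbits, faces = <a0,a1>-orbits. *)

Section Gem.
Variable T : finType.

Definition rel2 (f g : T -> T) : rel T := fun x y => (y == f x) || (y == g x).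

Definition orb2 (f g : T -> T) (x : T) : {set T} := [set y | connect (rel2 f g) x y].

Variables a0 a1 a2 : T -> T.

Definition vertex_of x := orb2 a1 a2 x.
Definition edge_of x := orb2 a0 a2 x.
Definition face_of x := orb2 a0 a1 x.

Definition nvertices := #|[set vertex_of x | x in T]|.
Definition nedges := #|[set edge_of x | x in T]|.
Definition nfaces := #|[set face_of x | x in T]|.

(* degree of the vertex containing flag x (each edge-end = 2 flags) *)
Definition degree x := #|vertex_of x| %/ 2.

Definition is_gem :=
  [/\ involutive a0, involutive a1, involutive a2,
      (forall x, [/\ a0 x != x, a1 x != x & a2 x != x]) &
      (forall x, a0 (a2 x) = a2 (a0 x) /\ a0 (a2 x) != x)].

Definition gem_connected :=
  forall x y, connect (fun u v => [|| v == a0 u, v == a1 u | v == a2 u]) x y.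

(* the surface is orientable iff the flag graph is bipartite *)
Definition gem_orientable :=
  exists s : T -> bool, forall x,
    [/\ s (a0 x) != s x, s (a1 x) != s x & s (a2 x) != s x].

(* cellular embedding of a connected multigraph in the projective plane:
   connected, non-orientable, Euler characteristic V - E + F = 1 *)
Definition projective_plane_map :=
  [/\ is_gem, gem_connected, ~ gem_orientable &
      nvertices + nfaces = nedges + 1].

(* no loops: the two ends of every edge lie at distinct vertices *)
Definition loopless := forall x, a0 x \notin vertex_of x.

(* every facial closed walk has length 3 (a face of length k has 2k flags) *)
Definition triangular := forall x, #|face_of x| = 6.

Definition multitriangulation_pp :=
  [/\ projective_plane_map, loopless & triangular].

End Gem.

From mathcomp Require Import all_boot zify.
Set Implicit Arguments. Unset Strict Implicit. Unset Printing Implicit Defensive.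

(* Every triangular face has 6 flags and every edge 4, so Euler's formula
   V - E + F = 1 becomes 12 V = |T| + 12: the average degree is below 6.
   Degrees are at least 2, since a vertex of degree 1 forces a loop on the
   triangle through it.  If no degree is 2, 3, 4 or 6 and no two degree-5
   vertices are adjacent, every vertex has degree 5 (10 flags) or at least 7
   (14 flags), so 70 V <= 7 |T5| + 5 |T - T5| where T5 is the set of flags at
   degree-5 vertices.  Moreover |T5| <= |T - T5| / 2: a0 sends T5 to flags
   at big vertices next to a degree-5 vertex, and a1 sends those to flags at
   big vertices that are not, since the corners of a triangle are pairwise
   adjacent.  These bounds contradict 12 V = |T| + 12. *)

Section InvolutionPair.
Variables (T : finType) (f g : T -> T).
Hypotheses (fK : involutive f) (gK : involutive g).
Hypotheses (f_nfix : forall x, f x != x) (g_nfix : forall x, g x != x).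

Lemma rel2_sym : connect_sym (rel2 f g).
Proof.
apply: sym_connect_sym => x y; rewrite /rel2.
by apply/idP/idP => /orP[] /eqP->; rewrite ?fK ?gK eqxx ?orbT.
Qed.

Lemma orb2_id x : x \in orb2 f g x.
Proof. by rewrite inE connect0. Qed.

Lemma mem_orb2_f x y : y \in orb2 f g x -> f y \in orb2 f g x.
Proof. by rewrite !inE => xy; apply: connect_trans xy (connect1 _); rewrite /rel2 eqxx. Qed.

Lemma mem_orb2_g x y : y \in orb2 f g x -> g y \in orb2 f g x.
Proof. by rewrite !inE => xy; apply: connect_trans xy (connect1 _); rewrite /rel2 eqxx orbT. Qed.

Lemma orb2_eq x y : y \in orb2 f g x -> orb2 f g y = orb2 f g x.
Proof.
rewrite inE => xy; apply/setP => z; rewrite !inE.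
apply/idP/idP => [|xz]; first exact: connect_trans.
by rewrite rel2_sym in xy; apply: connect_trans xy xz.
Qed.

Local Notation rot := (g \o f).
Local Notation rot_orbit x := [set y | fconnect rot x y].

Lemma rot_inj : injective rot.
Proof. exact: inj_comp (inv_inj gK) (inv_inj fK). Qed.

Lemma rot_f_rot x : rot (f (rot x)) = f x.
Proof. by rewrite /= fK gK. Qed.

(* f conjugates rot to its inverse, so f y = rot^n y descends to n = 0 or
   n = 1, where f or g would have a fixed point. *)
Lemma f_iter_rot_neq i j x : f (iter i rot x) != iter j rot x.
Proof.
elim: i j => [|i IHi] j; last first.
  apply: contra (IHi j.+1) => /eqP fx_eq.
  by rewrite -[f (iter i _ _)]rot_f_rot -iterS fx_eq.
suffices no_fix n y : (f y != iter n rot y) && (f y != iter n.+1 rot y).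
  by case/andP: (no_fix j x).
elim: n y => [|n IHn] y; first by rewrite f_nfix eq_sym g_nfix.
case/andP: (IHn y) => _ ->; case/andP: (IHn (rot y)) => + _.
rewrite -iterSr; apply: contra => /eqP fy_eq.
by rewrite -(inj_eq rot_inj) rot_f_rot fy_eq.
Qed.

Lemma orb2_rotE x :
  orb2 f g x = rot_orbit x :|: f @: rot_orbit x.
Proof.
have rel2f y : rel2 f g y (f y) by rewrite /rel2 eqxx.
have rel2g y : rel2 f g y (g y) by rewrite /rel2 eqxx orbT.
apply/eqP; rewrite eqEsubset; apply/andP; split; apply/subsetP => y; last first.
  have rot_rel2 : subrel (frel rot) (connect (rel2 f g)).
    by move=> u _ /eqP<-; apply: connect_trans (connect1 (rel2f u)) (connect1 (rel2g _)).
  rewrite !inE => /orP[/(connect_sub rot_rel2) // | /imsetP[z]]; rewrite inE => xz ->.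
  exact: connect_trans (connect_sub rot_rel2 xz) (connect1 (rel2f z)).
have S_closed : closed (rel2 f g) (rot_orbit x :|: f @: rot_orbit x).
  apply: intro_closed; first exact: rel2_sym.
  move=> u v /orP[] /eqP-> /setUP[]; rewrite ?inE.
  - by move=> xu; rewrite imset_f ?inE ?orbT.
  - by case/imsetP=> z + ->; rewrite fK !inE => ->.
  - move=> xu; rewrite -[g u]fK imset_f ?orbT // inE.
    apply: connect_trans xu _; rewrite fconnect_sym; last exact: rot_inj.
    by apply: connect1; rewrite /= fK gK.
  - by case/imsetP=> z; rewrite inE => xz ->; rewrite (connect_trans xz) ?fconnect1.
by rewrite inE => /(closed_connect S_closed) <-; rewrite !inE connect0.
Qed.

Lemma card_orb2 x : #|orb2 f g x| = (order rot x).*2.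
Proof.
rewrite orb2_rotE cardsU card_imset; last exact: inv_inj.
have -> : #|rot_orbit x| = order rot x by apply: eq_card => y; rewrite inE.
suffices -> : rot_orbit x :&: f @: rot_orbit x = set0.
  by rewrite cards0 subn0 addnn.
apply/setP => y; rewrite !inE; apply/negP => /andP[xy /imsetP[z]].
rewrite inE => xz yE; have := f_iter_rot_neq (findex rot x z) (findex rot x y) x.
by rewrite !iter_findex // -yE eqxx.
Qed.

End InvolutionPair.

Section Classes.
Variables (T : finType) (cls : T -> {set T}).
Hypotheses (cls_id : forall x, x \in cls x)
           (cls_eq : forall x y, y \in cls x -> cls y = cls x).

Local Notation classes := [set cls x | x in T].

Lemma card_classes_preim (Q : pred {set T}) :
  #|[set x | Q (cls x)]| = \sum_(A in classes | Q A) #|A|.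
Proof.
rewrite -sum1_card (partition_big cls (fun A => (A \in classes) && Q A)); last first.
  by move=> x; rewrite inE => Qx; rewrite imset_f.
apply: eq_bigr => _ /andP[/imsetP[y _ ->] Qy]; rewrite -sum1_card.
apply: eq_bigl => x; rewrite inE.
apply/andP/idP => [[_ /eqP <-] // | xy].
by rewrite (cls_eq xy) eqxx Qy.
Qed.

Lemma card_classes_leq (Q : pred {set T}) k :
  (forall x, Q (cls x) -> k <= #|cls x|) ->
  #|[set A in classes | Q A]| * k <= #|[set x | Q (cls x)]|.
Proof.
move=> cls_ge; rewrite card_classes_preim -sum_nat_const.
rewrite (eq_bigl (fun A => (A \in classes) && Q A)) => [|A]; last by rewrite inE.
by apply: leq_sum => _ /andP[/imsetP[x _ ->]]; apply: cls_ge.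
Qed.

Lemma card_classes_const k : (forall x, #|cls x| = k) -> #|T| = #|classes| * k.
Proof.
move=> cls_k; rewrite -cardsT.
have -> : [set: T] = [set x | predT (cls x)] by apply/setP => x; rewrite !inE.
rewrite card_classes_preim -sum_nat_const.
by apply: eq_big => [A | _ /andP[/imsetP[x _ ->] _]]; rewrite ?andbT.
Qed.

End Classes.

Section Gem.
Variables (T : finType) (a0 a1 a2 : T -> T).
Hypothesis gem : is_gem a0 a1 a2.

Let a0K : involutive a0. Proof. by case: gem. Qed.
Let a1K : involutive a1. Proof. by case: gem. Qed.
Let a2K : involutive a2. Proof. by case: gem. Qed.
Let a0_nfix x : a0 x != x. Proof. by case: gem => _ _ _ /(_ x)[]. Qed.
Let a1_nfix x : a1 x != x. Proof. by case: gem => _ _ _ /(_ x)[]. Qed.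
Let a2_nfix x : a2 x != x. Proof. by case: gem => _ _ _ /(_ x)[]. Qed.
Let a02C x : a0 (a2 x) = a2 (a0 x). Proof. by case: gem => _ _ _ _ /(_ x)[]. Qed.
Let a20_nfix x : a2 (a0 x) != x. Proof. by case: gem => _ _ _ _ /(_ x)[<-]. Qed.

Lemma card_edge x : #|edge_of a0 a2 x| = 4.
Proof.
rewrite /edge_of card_orb2 // (@order_cycle _ _ [:: x; a2 (a0 x)]) ?inE ?eqxx //=.
  by rewrite -a02C a0K a2K !eqxx.
by rewrite inE eq_sym a20_nfix.
Qed.

Lemma degreeE x : degree a1 a2 x = order (a2 \o a1) x.
Proof. by rewrite /degree /vertex_of card_orb2 // divn2 doubleK. Qed.

Lemma degree_a1 x : degree a1 a2 (a1 x) = degree a1 a2 x.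
Proof. by rewrite /degree /vertex_of (@orb2_eq _ _ _ a1K a2K x) // mem_orb2_f ?orb2_id. Qed.

Lemma nvertices_leq :
  (forall x, degree a1 a2 x != 5 -> 7 <= degree a1 a2 x) ->
  nvertices a1 a2 * 70 <=
    #|[set x | degree a1 a2 x == 5]| * 7 + #|[set x | degree a1 a2 x != 5]| * 5.
Proof.
move=> big; pose Q5 (A : {set T}) := #|A| %/ 2 == 5.
have cls_id := orb2_id a1 a2; have cls_eq := orb2_eq a1K a2K.
have n5 : #|[set A in [set vertex_of a1 a2 x | x in T] | Q5 A]| * 10
          <= #|[set x | degree a1 a2 x == 5]|.
  by apply: (card_classes_leq cls_id cls_eq (Q := Q5)) => x /eqP; lia.
have nbig : #|[set A in [set vertex_of a1 a2 x | x in T] | ~~ Q5 A]| * 14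
            <= #|[set x | degree a1 a2 x != 5]|.
  apply: (card_classes_leq cls_id cls_eq (Q := fun A => ~~ Q5 A)) => x.
  by move=> nd5; have := big x nd5; rewrite /degree /vertex_of; lia.
suff : nvertices a1 a2 = #|[set A in [set vertex_of a1 a2 x | x in T] | Q5 A]|
                       + #|[set A in [set vertex_of a1 a2 x | x in T] | ~~ Q5 A]| by lia.
rewrite /nvertices -(cardsID [set A | Q5 A]) !setIdE setDE.
by congr (_ + #|_ :&: _|); apply/setP => A; rewrite !inE.
Qed.

Hypothesis tri : triangular a0 a1.

Lemma order_face_rot x : order (a1 \o a0) x = 3.
Proof. by apply/eqP; rewrite -(eqn_pmul2l (isT : 0 < 2)) mul2n -card_orb2 ?tri. Qed.

Lemma braid01 x : a1 (a0 (a1 x)) = a0 (a1 (a0 x)).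
Proof.
have := iter_order (rot_inj a0K a1K) (a0 x).
by rewrite order_face_rot /= a0K => <-; rewrite a1K a0K.
Qed.

Hypothesis ll : loopless a0 a1 a2.

Lemma a1_neq_a2 x : a1 x != a2 x.
Proof.
apply/eqP => a12x; have := ll (a1 (a0 x)); apply/negP; rewrite negbK.
rewrite -braid01 a12x a02C -{1}[a0 x]a1K.
by apply: mem_orb2_f; apply: mem_orb2_g; apply: mem_orb2_f; apply: orb2_id.
Qed.

Lemma degree_gt1 x : 1 < degree a1 a2 x.
Proof.
rewrite degreeE ltn_neqAle order_gt0 andbT; apply: contra (a1_neq_a2 x) => /eqP ord1.
by have := iter_order (rot_inj a1K a2K) x; rewrite -ord1 /= => {2}<-; rewrite a2K.
Qed.

Lemma card_degree5_leq :
  (forall x, degree a1 a2 x = 5 -> degree a1 a2 (a0 x) != 5) ->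
  #|[set x | degree a1 a2 x == 5]|.*2 <= #|[set x | degree a1 a2 x != 5]|.
Proof.
set D5 := [set x | _ == 5]; set B := [set x | _ != 5] => no55.
pose N := [set y | degree a1 a2 (a0 y) == 5].
have D5_B : #|D5| <= #|B :&: N|.
  rewrite -(card_imset _ (inv_inj a0K)); apply/subset_leq_card/subsetP => z /imsetP[x].
  rewrite !inE => /eqP d5 ->; rewrite a0K d5 eqxx andbT; exact: no55.
have BN_B : #|B :&: N| <= #|B :\: N|.
  rewrite -(card_imset _ (inv_inj a1K)); apply/subset_leq_card/subsetP => z /imsetP[y].
  rewrite !inE => /andP[Bd5 /eqP d5] ->; rewrite degree_a1 Bd5 andbT.
  by have := braid01 (a0 y); rewrite a0K => <-; rewrite degree_a1 no55 // degree_a1.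
by rewrite -addnn -(cardsID N B) leq_add // (leq_trans D5_B).
Qed.

Hypothesis euler : nvertices a1 a2 + nfaces a0 a1 = nedges a0 a2 + 1.

Lemma nvertices_mul12 : nvertices a1 a2 * 12 = #|T| + 12.
Proof.
have faces : #|T| = nfaces a0 a1 * 6 :=
  card_classes_const (orb2_id a0 a1) (orb2_eq a0K a1K) tri.
have edges : #|T| = nedges a0 a2 * 4 :=
  card_classes_const (orb2_id a0 a2) (orb2_eq a0K a2K) card_edge.
lia.
Qed.

End Gem.

Theorem lemma2p17 (T : finType) (a0 a1 a2 : T -> T) :
  multitriangulation_pp a0 a1 a2 ->
  (exists x : T, degree a1 a2 x \in [:: 2; 3; 4; 6]) \/
  (exists x : T, degree a1 a2 x = 5 /\ degree a1 a2 (a0 x) = 5).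
Proof.
case=> -[gem _ _ euler] ll tri.
have [/existsP[x small] | /existsPn no_small] :=
  boolP [exists x, degree a1 a2 x \in [:: 2; 3; 4; 6]].
  by left; exists x.
have [/existsP[x /andP[/eqP d5 /eqP d5']] | /existsPn no55] :=
  boolP [exists x, (degree a1 a2 x == 5) && (degree a1 a2 (a0 x) == 5)].
  by right; exists x.
exfalso.
have big x : degree a1 a2 x != 5 -> 7 <= degree a1 a2 x.
  by have := degree_gt1 gem tri ll x; move: (no_small x); rewrite !inE; lia.
have no_adjacent5 x : degree a1 a2 x = 5 -> degree a1 a2 (a0 x) != 5.
  by move=> d5; move: (no55 x); rewrite d5.
have flags : #|[set x | degree a1 a2 x == 5]| + #|[set x | degree a1 a2 x != 5]| = #|T|.
  rewrite -(cardsC [set x | degree a1 a2 x == 5]); congr (_ + _).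
  by apply: eq_card => x; rewrite !inE.
have := nvertices_leq gem big; have := nvertices_mul12 gem tri euler.
have := card_degree5_leq gem tri no_adjacent5.
lia.
Qed.
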